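(* With $g=\delta_{\{0\}}$ on $c_c$, we have $\partial(f+g)(0)=\ell^2$, whereas $\partial f(0)+\partial g(0)=\emptyset$. In particular $\partial(f+g)(0)\neq\partial f(0)+\partial g(0)$, although $0\in\operatorname{core}(\operatorname{dom} f-\operatorname{dom} g)$ and both $f$ and $g$ are convex and lower semicontinuous.
   Context: Let $c_c$ be the space of finitely supported real sequences with the $\ell^2$-norm; its dual is identified with $\ell^2$ via $\langle z,y\rangle=\sum_n z_ny_n$. Let $f\colon c_c\to\mathbb{R}$, $f(x)=\sum_{n=1}^\infty \frac{n^2}{2}(x_n-n^{-2})^2$. For convex $h\colon c_c\to(-\infty,\infty]$ and $x$ with $h(x)<\infty$, $\partial h(x)=\{z\in\ell^2:\forall y\in c_c:\ h(y)\ge h(x)+\langle z,y-x\rangle\}$. $\delta_{\{0\}}$ is the indicator function of $\{0\}$, $\operatorname{dom}h=\{x:h(x)<\infty\}$, and $\operatorname{core}$ denotes the algebraic interior. *)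

From Stdlib Require Import Reals ClassicalDescription.
From Coquelicot Require Import Coquelicot.
Open Scope R_scope.

(* Real sequences; coordinate x_n (n >= 1) of the paper is [x (n-1)],
   i.e. [x k] is the coordinate x_{k+1}. *)
Definition seqR := nat -> R.

Definition cc (x : seqR) : Prop := exists N : nat, forall k, (N <= k)%nat -> x k = 0.

Definition l2 (z : seqR) : Prop := ex_series (fun k => (z k) ^ 2).

Definition pairing (z y : seqR) : R := Series (fun k => z k * y k).

Definition norm2 (v : seqR) : R := sqrt (Series (fun k => (v k) ^ 2)).

Definition zero_seq : seqR := fun _ => 0.
Definition seq_sub (x y : seqR) : seqR := fun k => x k - y k.
Definition seq_add (x y : seqR) : seqR := fun k => x k + y k.

Definition f7 (x : seqR) : Rbar :=
  Finite (Series (fun k => (INR (S k))^2 / 2 * (x k - / (INR (S k))^2)^2)).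

Definition g7 (x : seqR) : Rbar :=
  if excluded_middle_informative (forall k, x k = 0) then Finite 0 else p_infty.

Definition hsum (h1 h2 : seqR -> Rbar) : seqR -> Rbar := fun x => Rbar_plus (h1 x) (h2 x).

Definition subdiff (h : seqR -> Rbar) (x : seqR) (z : seqR) : Prop :=
  l2 z /\ forall y, cc y -> Rbar_le (Rbar_plus (h x) (Finite (pairing z (seq_sub y x)))) (h y).

Definition setsum (A B : seqR -> Prop) (z : seqR) : Prop :=
  exists a b, A a /\ B b /\ forall k, z k = a k + b k.
Definition setdiff (A B : seqR -> Prop) (z : seqR) : Prop :=
  exists a b, A a /\ B b /\ forall k, z k = a k - b k.

Definition dom (h : seqR -> Rbar) (x : seqR) : Prop := cc x /\ h x <> p_infty.

Definition core (A : seqR -> Prop) (x : seqR) : Prop :=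
  A x /\ forall d, cc d -> exists delta, 0 < delta /\
    forall t, 0 <= t <= delta -> A (fun k => x k + t * d k).

Definition convex_cc (h : seqR -> Rbar) : Prop :=
  forall x y, cc x -> cc y -> forall l, 0 < l < 1 ->
    Rbar_le (h (fun k => l * x k + (1 - l) * y k))
            (Rbar_plus (Rbar_mult (Finite l) (h x)) (Rbar_mult (Finite (1 - l)) (h y))).

Definition lsc_cc (h : seqR -> Rbar) : Prop :=
  forall x, cc x -> forall M : R, Rbar_lt (Finite M) (h x) ->
    exists delta, 0 < delta /\
      forall y, cc y -> norm2 (seq_sub y x) < delta -> Rbar_lt (Finite M) (h y).

(* Off the origin g is +oo, so the subgradient inequality for f + g at 0 only has
   to be checked at y = 0, where it is an equality: every z in l^2 is a
   subgradient.  On the other hand f is a sum of one-variable parabolas, the k-th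
   of which has slope -1 at 0; testing the subgradient inequality of f at 0
   against t e_k for all real t forces z_k = -1 for every k, which is not an l^2
   sequence, so the subdifferential of f at 0 is empty.  Lower semicontinuity of
   f follows from the tangent-line lower bound of each parabola applied to
   finitely many terms, since every coordinate is 1-Lipschitz for the l^2 norm. *)

From Stdlib Require Import Reals Lra Lia ClassicalDescription Classical.
From Coquelicot Require Import Coquelicot.
Open Scope R_scope.

Lemma sum_n_stationary (u : seqR) N :
  (forall k, (N <= k)%nat -> u k = 0) -> forall n, (N <= n)%nat -> sum_n u n = sum_n u N.
Proof.
  intros Hu n Hn; induction Hn as [|n Hn IH]; [reflexivity|].
  rewrite sum_Sn, IH, (Hu (S n)) by lia. apply Rplus_0_r.
Qed.

Lemma is_series_eventually_zero (u : seqR) N :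
  (forall k, (N <= k)%nat -> u k = 0) -> is_series u (sum_n u N).
Proof.
  intros Hu. change (is_lim_seq (sum_n u) (sum_n u N)).
  apply is_lim_seq_ext_loc with (fun _ => sum_n u N); [|apply is_lim_seq_const].
  exists N. intros n Hn. symmetry. exact (sum_n_stationary u N Hu n Hn).
Qed.

Lemma ex_series_cc (u : seqR) : cc u -> ex_series u.
Proof. intros [N Hu]. eexists. exact (is_series_eventually_zero u N Hu). Qed.

Lemma cc_seq_sub x y : cc x -> cc y -> cc (seq_sub y x).
Proof.
  intros [N1 H1] [N2 H2]. exists (N1 + N2)%nat. intros k Hk. unfold seq_sub.
  rewrite H1, H2 by lia. ring.
Qed.

Definition single (k : nat) (c : R) : seqR := fun j => if Nat.eqb j k then c else 0.

Lemma cc_single k c : cc (single k c).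
Proof.
  exists (S k). intros j Hj. unfold single. destruct (Nat.eqb_spec j k); [lia|reflexivity].
Qed.

Lemma sum_n_single k c n : sum_n (single k c) n = if Nat.leb k n then c else 0.
Proof.
  unfold single. induction n as [|n IH].
  - rewrite sum_O. destruct k; reflexivity.
  - rewrite sum_Sn, IH.
    destruct (Nat.leb_spec k n), (Nat.eqb_spec (S n) k), (Nat.leb_spec k (S n)); try lia;
      cbn; lra.
Qed.

Lemma Series_single k c : Series (single k c) = c.
Proof.
  assert (Hk : forall j, (S k <= j)%nat -> single k c j = 0).
  { intros j Hj. unfold single. destruct (Nat.eqb_spec j k); [lia|reflexivity]. }
  rewrite (is_series_unique _ _ (is_series_eventually_zero _ _ Hk)), sum_n_single.
  destruct (Nat.leb_spec k (S k)); [reflexivity|lia].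
Qed.

Lemma Series_mult_single (a : seqR) k t : Series (fun j => a j * single k t j) = a k * t.
Proof.
  rewrite <- (Series_single k (a k * t)). apply Series_ext. intros j.
  unfold single. destruct (Nat.eqb_spec j k); subst; ring.
Qed.

Lemma Series_ge_term (u : seqR) k : ex_series u -> (forall j, 0 <= u j) -> u k <= Series u.
Proof.
  intros Hu Hpos. rewrite <- (Series_single k (u k)). apply Series_le; [|exact Hu].
  intros j. unfold single. destruct (Nat.eqb_spec j k); subst; split; auto; lra.
Qed.

Lemma Series_ge_sum_n (u : seqR) n : ex_series u -> (forall j, 0 <= u j) -> sum_n u n <= Series u.
Proof.
  intros Hu Hpos. rewrite sum_n_Reals. apply sum_incr; [|exact Hpos].
  apply is_series_Reals, Series_correct, Hu.
Qed.

Lemma Rabs_le_norm2 v k : cc v -> Rabs (v k) <= norm2 v.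
Proof.
  intros Hv. unfold norm2. rewrite <- sqrt_Rsqr_abs. apply sqrt_le_1_alt.
  replace (Rsqr (v k)) with (v k ^ 2) by (unfold Rsqr; ring).
  apply (Series_ge_term (fun j => v j ^ 2)); [|intros; apply pow2_ge_0].
  apply ex_series_cc. destruct Hv as [N HN]. exists N. intros j Hj. rewrite HN by exact Hj. ring.
Qed.

Lemma INR_S_pos k : 0 < INR (S k).
Proof. apply lt_0_INR. lia. Qed.

Lemma sum_n_inv_sq_le n : sum_n (fun k => / INR (S k) ^ 2) n <= 2 - / INR (S n).
Proof.
  induction n as [|n IH].
  - rewrite sum_O. simpl. lra.
  - rewrite sum_Sn. change plus with Rplus.
    pose proof (INR_S_pos n) as Hn. rewrite (S_INR (S n)).
    (* telescoping: 1/(m+1)^2 <= 1/m - 1/(m+1) *)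
    assert (E : / (INR (S n) + 1) ^ 2 + / (INR (S n) + 1) - / INR (S n)
               = - / (INR (S n) * (INR (S n) + 1) ^ 2)) by (field; lra).
    assert (0 < / (INR (S n) * (INR (S n) + 1) ^ 2)).
    { apply Rinv_0_lt_compat, Rmult_lt_0_compat; nra. }
    lra.
Qed.

Lemma ex_series_inv_sq : ex_series (fun k => / INR (S k) ^ 2).
Proof.
  destruct (ex_finite_lim_seq_incr (sum_n (fun k => / INR (S k) ^ 2)) 2) as [l Hl].
  - intros n. rewrite sum_Sn. change plus with Rplus.
    pose proof (INR_S_pos (S n)).
    assert (0 < / INR (S (S n)) ^ 2) by (apply Rinv_0_lt_compat; nra). lra.
  - intros n. pose proof (sum_n_inv_sq_le n). pose proof (INR_S_pos n).
    assert (0 < / INR (S n)) by (apply Rinv_0_lt_compat; lra). lra.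
  - exists l. exact Hl.
Qed.

Definition fterm (k : nat) (r : R) : R := INR (S k) ^ 2 / 2 * (r - / INR (S k) ^ 2) ^ 2.

Lemma f7_Series x : f7 x = Finite (Series (fun k => fterm k (x k))).
Proof. reflexivity. Qed.

Lemma fterm_ge0 k r : 0 <= fterm k r.
Proof.
  unfold fterm. pose proof (pow2_ge_0 (INR (S k))). pose proof (pow2_ge_0 (r - / INR (S k) ^ 2)).
  apply Rmult_le_pos; [apply Rmult_le_pos|]; lra.
Qed.

Lemma fterm_0 k : fterm k 0 = / INR (S k) ^ 2 / 2.
Proof. unfold fterm. pose proof (INR_S_pos k). field. lra. Qed.

Lemma fterm_expand k s : fterm k s = fterm k 0 - s + INR (S k) ^ 2 / 2 * s ^ 2.
Proof. unfold fterm. pose proof (INR_S_pos k). field. lra. Qed.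

Lemma fterm_taylor k r s :
  fterm k s = fterm k r + INR (S k) ^ 2 * (r - / INR (S k) ^ 2) * (s - r)
              + INR (S k) ^ 2 / 2 * (s - r) ^ 2.
Proof. unfold fterm. pose proof (INR_S_pos k). field. lra. Qed.

Lemma fterm_lower_bound k r s :
  fterm k r - INR (S k) ^ 2 * Rabs (r - / INR (S k) ^ 2) * Rabs (s - r) <= fterm k s.
Proof.
  rewrite (fterm_taylor k r s).
  set (W := INR (S k) ^ 2). set (p := r - / W).
  assert (HW : 0 <= W) by apply pow2_ge_0.
  assert (Hlin : - (Rabs p * Rabs (s - r)) <= p * (s - r)).
  { rewrite <- Rabs_mult. pose proof (Rle_abs (- (p * (s - r)))). rewrite Rabs_Ropp in *. lra. }
  pose proof (Rmult_le_compat_l W _ _ HW Hlin).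
  assert (0 <= W / 2 * (s - r) ^ 2) by (pose proof (pow2_ge_0 (s - r)); apply Rmult_le_pos; lra).
  replace (W * p * (s - r)) with (W * (p * (s - r))) by ring. nra.
Qed.

Lemma fterm_convex k a b l : 0 < l < 1 ->
  fterm k (l * a + (1 - l) * b) <= l * fterm k a + (1 - l) * fterm k b.
Proof.
  intros Hl. unfold fterm. set (W := INR (S k) ^ 2). set (c := / W).
  assert (HW : 0 <= W) by apply pow2_ge_0.
  assert (E : l * (W / 2 * (a - c) ^ 2) + (1 - l) * (W / 2 * (b - c) ^ 2)
              - W / 2 * (l * a + (1 - l) * b - c) ^ 2
              = W / 2 * (l * (1 - l) * (a - b) ^ 2)) by (unfold Rdiv; ring).
  assert (0 <= W / 2 * (l * (1 - l) * (a - b) ^ 2)).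
  { apply Rmult_le_pos; [lra|]. apply Rmult_le_pos; [nra|apply pow2_ge_0]. }
  lra.
Qed.

Lemma ex_series_fterm x : cc x -> ex_series (fun k => fterm k (x k)).
Proof.
  intros Hx.
  assert (H0 : ex_series (fun k => fterm k 0)).
  { apply ex_series_ext with (fun k => / INR (S k) ^ 2 * / 2).
    - intros k. rewrite fterm_0. reflexivity.
    - apply ex_series_scal_r, ex_series_inv_sq. }
  assert (Hd : ex_series (fun k => fterm k (x k) - fterm k 0)).
  { apply ex_series_cc. destruct Hx as [N HN]. exists N. intros k Hk. rewrite HN by exact Hk. ring. }
  apply ex_series_ext with (fun k => plus (fterm k 0) (fterm k (x k) - fterm k 0)).
  - intros k. unfold plus; simpl. ring.
  - exact (ex_series_plus _ _ H0 Hd).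
Qed.

Lemma g7_eq0 x : (forall k, x k = 0) -> g7 x = Finite 0.
Proof. intros Hx. unfold g7. destruct (excluded_middle_informative _); tauto. Qed.

Lemma g7_eq_pinfty x : ~ (forall k, x k = 0) -> g7 x = p_infty.
Proof. intros Hx. unfold g7. destruct (excluded_middle_informative _); tauto. Qed.

Lemma Rbar_le_pinfty (a : Rbar) : Rbar_le a p_infty.
Proof. destruct a; simpl; trivial. Qed.

Lemma subdiff_f7_g7_zero z : subdiff (hsum f7 g7) zero_seq z <-> l2 z.
Proof.
  split; [intros [Hz _]; exact Hz|]. intros Hz. split; [exact Hz|]. intros y _.
  unfold hsum. rewrite (g7_eq0 zero_seq) by reflexivity.
  destruct (classic (forall k, y k = 0)) as [Y|Y].
  - assert (Ep : pairing z (seq_sub y zero_seq) = 0).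
    { unfold pairing. transitivity (Series (single 0 0)); [|apply Series_single].
      apply Series_ext. intros j. unfold seq_sub, zero_seq, single. rewrite Y.
      destruct (Nat.eqb j 0); ring. }
    assert (Ef : f7 y = f7 zero_seq).
    { rewrite !f7_Series. f_equal. apply Series_ext. intros j. rewrite Y. reflexivity. }
    rewrite Ep, Ef, (g7_eq0 y Y), f7_Series. simpl. lra.
  - rewrite (g7_eq_pinfty y Y), f7_Series. apply Rbar_le_pinfty.
Qed.

Lemma affine_le_quadratic a e : 0 < a -> (forall t, e * t <= a * t ^ 2) -> e = 0.
Proof.
  intros Ha He. set (q := e / (2 * a)).
  assert (Eq : e = 2 * a * q) by (unfold q; field; lra).
  specialize (He q). rewrite Eq in He |- *.
  assert (a * q ^ 2 <= 0) by lra.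
  assert (q ^ 2 <= 0) by (apply Rmult_le_reg_l with a; lra).
  assert (Hq : q = 0) by nra.
  rewrite Hq. ring.
Qed.

Lemma subdiff_f7_zero_coord z k : subdiff f7 zero_seq z -> z k = -1.
Proof.
  intros [_ Hz].
  assert (Hlin : forall t, (z k + 1) * t <= INR (S k) ^ 2 / 2 * t ^ 2).
  { intros t. specialize (Hz (single k t) (cc_single k t)).
    assert (Ep : pairing z (seq_sub (single k t) zero_seq) = z k * t).
    { rewrite <- Series_mult_single. apply Series_ext. intros j.
      unfold seq_sub, zero_seq. ring. }
    assert (Ef : Series (fun j => fterm j (single k t j))
                 = Series (fun j => fterm j (zero_seq j)) + (INR (S k) ^ 2 / 2 * t ^ 2 - t)).
    { rewrite <- (Series_single k (INR (S k) ^ 2 / 2 * t ^ 2 - t)), <- Series_plus.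
      - apply Series_ext. intros j. rewrite fterm_expand. unfold single, zero_seq.
        destruct (Nat.eqb_spec j k); subst; ring.
      - apply (ex_series_fterm zero_seq). exists 0%nat. reflexivity.
      - apply ex_series_cc, cc_single. }
    rewrite Ep, !f7_Series, Ef in Hz. cbn [Rbar_plus Rbar_plus' Rbar_le] in Hz. lra. }
  assert (z k + 1 = 0).
  { apply (affine_le_quadratic (INR (S k) ^ 2 / 2)); [|exact Hlin].
    pose proof (INR_S_pos k). nra. }
  lra.
Qed.

Lemma subdiff_f7_zero_empty z : ~ subdiff f7 zero_seq z.
Proof.
  intros Hz. assert (Hl : l2 z) by apply Hz.
  assert (Hone : ex_series (fun _ : nat => 1)).
  { apply ex_series_ext with (fun k => z k ^ 2); [|exact Hl].
    intros k. change (z k ^ 2 = 1). rewrite (subdiff_f7_zero_coord z k Hz). ring. }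
  apply ex_series_lim_0, is_lim_seq_unique in Hone.
  rewrite Lim_seq_const in Hone. injection Hone. lra.
Qed.

Lemma setsum_subdiff_f7_g7_empty z : ~ setsum (subdiff f7 zero_seq) (subdiff g7 zero_seq) z.
Proof. intros (a & b & Ha & _). exact (subdiff_f7_zero_empty a Ha). Qed.

Lemma core_dom_diff : core (setdiff (dom f7) (dom g7)) zero_seq.
Proof.
  assert (Hdf : forall x, cc x -> dom f7 x) by (intros x Hx; split; [exact Hx|discriminate]).
  assert (Hdg : dom g7 zero_seq).
  { split; [exists 0%nat; reflexivity|]. rewrite g7_eq0 by reflexivity. discriminate. }
  split.
  - exists zero_seq, zero_seq. split; [apply Hdf; exists 0%nat; reflexivity|].
    split; [exact Hdg|]. intros k. unfold zero_seq. ring.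
  - intros d [N Hd]. exists 1. split; [lra|]. intros t _.
    exists (fun k => zero_seq k + t * d k), zero_seq. split; [|split; [exact Hdg|]].
    + apply Hdf. exists N. intros k Hk. unfold zero_seq. rewrite Hd by exact Hk. ring.
    + intros k. unfold zero_seq. ring.
Qed.

Lemma convex_f7 : convex_cc f7.
Proof.
  intros x y Hx Hy l Hl. rewrite !f7_Series. cbn [Rbar_mult Rbar_mult' Rbar_plus Rbar_plus' Rbar_le].
  pose proof (ex_series_fterm x Hx) as Ex. pose proof (ex_series_fterm y Hy) as Ey.
  rewrite <- !Series_scal_l, <- Series_plus.
  - apply Series_le.
    + intros n. split; [apply fterm_ge0|apply fterm_convex, Hl].
    + apply (ex_series_plus (fun n => l * fterm n (x n)) (fun n => (1 - l) * fterm n (y n)));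
        apply (ex_series_scal_l (V := R_NormedModule)); assumption.
  - apply (ex_series_scal_l (V := R_NormedModule)), Ex.
  - apply (ex_series_scal_l (V := R_NormedModule)), Ey.
Qed.

Lemma Rbar_mult_pos_pinfty l : 0 < l -> Rbar_mult (Finite l) p_infty = p_infty.
Proof.
  intros Hl. unfold Rbar_mult, Rbar_mult'.
  destruct (Rle_dec 0 l) as [H|]; [|lra].
  destruct (Rle_lt_or_eq_dec 0 l H); [reflexivity|lra].
Qed.

Lemma convex_g7 : convex_cc g7.
Proof.
  intros x y _ _ l Hl.
  destruct (classic (forall k, x k = 0)) as [X|X]; [destruct (classic (forall k, y k = 0)) as [Y|Y]|].
  - rewrite !g7_eq0 by (intros k; rewrite ?X, ?Y; ring). simpl. lra.
  - rewrite (g7_eq0 x X), (g7_eq_pinfty y Y), Rbar_mult_pos_pinfty by lra.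
    simpl. apply Rbar_le_pinfty.
  - rewrite (g7_eq_pinfty x X), Rbar_mult_pos_pinfty by lra.
    destruct (classic (forall k, y k = 0)) as [Y|Y].
    + rewrite (g7_eq0 y Y). apply Rbar_le_pinfty.
    + rewrite (g7_eq_pinfty y Y), Rbar_mult_pos_pinfty by lra. apply Rbar_le_pinfty.
Qed.

Lemma lsc_g7 : lsc_cc g7.
Proof.
  intros x Hx M HM. destruct (classic (forall k, x k = 0)) as [X|X].
  - rewrite (g7_eq0 x X) in HM. simpl in HM.
    exists 1. split; [lra|]. intros y _ _.
    destruct (classic (forall k, y k = 0)) as [Y|Y].
    + rewrite (g7_eq0 y Y). simpl. exact HM.
    + rewrite (g7_eq_pinfty y Y). simpl. trivial.
  - destruct (not_all_ex_not _ _ X) as [k Xk].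
    exists (Rabs (x k)). split; [apply Rabs_pos_lt, Xk|]. intros y Hy Hyx.
    rewrite g7_eq_pinfty; [simpl; trivial|]. intros Y.
    pose proof (Rabs_le_norm2 _ k (cc_seq_sub x y Hx Hy)) as Hk.
    replace (seq_sub y x k) with (- x k) in Hk by (unfold seq_sub; rewrite Y; ring).
    rewrite Rabs_Ropp in Hk. lra.
Qed.

Lemma sum_n_gt_of_Series_gt (u : seqR) M :
  ex_series u -> M < Series u -> exists N, M < sum_n u N.
Proof.
  intros Hu HM. pose proof (proj1 (is_series_Reals _ _) (Series_correct _ Hu)) as Hs.
  destruct (Hs (Series u - M)) as [N HN]; [lra|]. exists N.
  specialize (HN N (le_n N)). unfold Rdist in HN. rewrite sum_n_Reals.
  apply Rabs_def2 in HN. lra.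
Qed.

Lemma sum_n_fterm_lower_bound x y d N : (forall k, Rabs (y k - x k) <= d) ->
  sum_n (fun k => fterm k (x k)) N
  - d * sum_n (fun k => INR (S k) ^ 2 * Rabs (x k - / INR (S k) ^ 2)) N
  <= sum_n (fun k => fterm k (y k)) N.
Proof.
  intros Hd. rewrite !sum_n_Reals, scal_sum, <- minus_sum.
  apply sum_growing. intros k.
  pose proof (fterm_lower_bound k (x k) (y k)).
  assert (0 <= INR (S k) ^ 2 * Rabs (x k - / INR (S k) ^ 2)).
  { apply Rmult_le_pos; [apply pow2_ge_0|apply Rabs_pos]. }
  specialize (Hd k). nra.
Qed.

Lemma lsc_f7 : lsc_cc f7.
Proof.
  intros x Hx M HM. rewrite f7_Series in HM. cbn [Rbar_lt] in HM.
  destruct (sum_n_gt_of_Series_gt _ M (ex_series_fterm x Hx) HM) as [N HN].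
  set (C := sum_n (fun k => INR (S k) ^ 2 * Rabs (x k - / INR (S k) ^ 2)) N).
  set (D := sum_n (fun k => fterm k (x k)) N - M).
  assert (HC : 0 <= C).
  { unfold C. rewrite sum_n_Reals. apply cond_pos_sum. intros k.
    apply Rmult_le_pos; [apply pow2_ge_0|apply Rabs_pos]. }
  assert (HD : 0 < D) by (unfold D; lra).
  assert (Hd : 0 < D / (C + 1)) by (apply Rdiv_lt_0_compat; lra).
  assert (HdC : D / (C + 1) * C < D).
  { replace (D / (C + 1) * C) with (D - D / (C + 1)) by (field; lra). lra. }
  exists (D / (C + 1)). split; [exact Hd|]. intros y Hy Hyx.
  assert (Hcoord : forall k, Rabs (y k - x k) <= D / (C + 1)).
  { intros k. pose proof (Rabs_le_norm2 _ k (cc_seq_sub x y Hx Hy)). unfold seq_sub in *. lra. }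
  pose proof (sum_n_fterm_lower_bound x y _ N Hcoord) as Hlow. fold C in Hlow.
  pose proof (Series_ge_sum_n _ N (ex_series_fterm y Hy) (fun k => fterm_ge0 k (y k))).
  rewrite f7_Series. cbn [Rbar_lt].
  assert (HDdef : D = sum_n (fun k => fterm k (x k)) N - M) by reflexivity.
  clearbody C D. lra.
Qed.

Theorem mainTheorem7 :
  (forall z, subdiff (hsum f7 g7) zero_seq z <-> l2 z) /\
  (forall z, ~ setsum (subdiff f7 zero_seq) (subdiff g7 zero_seq) z) /\
  (exists z, subdiff (hsum f7 g7) zero_seq z /\
             ~ setsum (subdiff f7 zero_seq) (subdiff g7 zero_seq) z) /\
  core (setdiff (dom f7) (dom g7)) zero_seq /\
  convex_cc f7 /\ convex_cc g7 /\ lsc_cc f7 /\ lsc_cc g7.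
Proof.
  assert (Hl2 : l2 zero_seq).
  { apply ex_series_cc. exists 0%nat. intros k _. unfold zero_seq. ring. }
  split; [exact subdiff_f7_g7_zero|]. split; [exact setsum_subdiff_f7_g7_empty|]. split.
  { exists zero_seq. split; [apply subdiff_f7_g7_zero, Hl2|apply setsum_subdiff_f7_g7_empty]. }
  exact (conj core_dom_diff (conj convex_f7 (conj convex_g7 (conj lsc_f7 lsc_g7)))).
Qed.
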